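(* Let $(X,d)$ be a metric space, let $x_0\in X$ and $r\ge 0$, and let $C_{x_0,r}=\{x\in X: d(x_0,x)=r\}$. Define $\varphi:X\to[0,\infty)$ by $\varphi(x)=d(x,x_0)$ for all $x\in X$. If there exists a self-mapping $T:X\to X$ satisfying (C1)* $d(x,Tx)\le \varphi(x)+\varphi(Tx)-2r$ and (C2)* $d(Tx,x_0)\le r$ for each $x\in C_{x_0,r}$, then $C_{x_0,r}$ is a fixed circle of $T$, i.e. $Tx=x$ for every $x\in C_{x_0,r}$.
   Context: For a metric space $(X,d)$, the circle with center $x_0\in X$ and radius $r$ is $C_{x_0,r}=\{x\in X: d(x_0,x)=r\}$. For a self-mapping $T:X\to X$, the circle $C_{x_0,r}$ is called a fixed circle of $T$ if $Tx=x$ for every $x\in C_{x_0,r}$. *)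

From Stdlib Require Import Reals.
Open Scope R_scope.

Definition is_metric {X : Type} (d : X -> X -> R) : Prop :=
  (forall x y, 0 <= d x y) /\
  (forall x y, d x y = 0 <-> x = y) /\
  (forall x y, d x y = d y x) /\
  (forall x y z, d x z <= d x y + d y z).

Definition circle {X : Type} (d : X -> X -> R) (x0 : X) (r : R) : X -> Prop :=
  fun x => d x0 x = r.

Definition fixed_circle {X : Type} (d : X -> X -> R) (T : X -> X) (x0 : X) (r : R) : Prop :=
  forall x, circle d x0 r x -> T x = x.

From Stdlib Require Import Reals Lra.
Open Scope R_scope.

Lemma metric_eq_of_dist_le0 {X : Type} (d : X -> X -> R) :
  is_metric d -> forall x y, d x y <= 0 -> x = y.
Proof.
  intros [d_ge0 [d_eq0 _]] x y dxy_le0.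
  apply d_eq0, Rle_antisym; [exact dxy_le0 | apply d_ge0].
Qed.

Theorem theorem2p9 (X : Type) (d : X -> X -> R) (hd : is_metric d)
  (x0 : X) (r : R) (hr : 0 <= r) (T : X -> X) :
  let phi := fun x => d x x0 in
  (forall x, circle d x0 r x ->
     d x (T x) <= phi x + phi (T x) - 2 * r /\ d (T x) x0 <= r) ->
  fixed_circle d T x0 r.
Proof.
  (* With phi x = r, (C1) reads d(x, Tx) <= phi (Tx) - r, which (C2) makes
     nonpositive. *)
  intros phi HC x x_on_circle.
  destruct (HC x x_on_circle) as [C1 C2].
  assert (phi_x : phi x = r).
  { unfold phi, circle in *. destruct hd as [_ [_ [d_sym _]]].
    rewrite d_sym. exact x_on_circle. }
  symmetry. apply (metric_eq_of_dist_le0 d hd). unfold phi in *. lra.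
Qed.
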